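(* Let $n,m$ be positive integers and let $(\mathbf{x}_i,\mathbf{y}_i)_{i=1}^m$ be i.i.d. samples from a zero-mean jointly Gaussian distribution on $\mathbb{R}^n\times\mathbb{R}^n$ with $\mathbb{E}[\mathbf{x}\mathbf{x}^\top]=\mathbb{E}[\mathbf{y}\mathbf{y}^\top]=\mathbf{I}_n$ and $\boldsymbol{\Sigma}_{xy}=\mathbb{E}[\mathbf{x}\mathbf{y}^\top]=\rho\mathbf{u}\mathbf{v}^\top$, where $\rho\in(0,1)$, $\|\mathbf{u}\|_2=\|\mathbf{v}\|_2=1$, $\|\mathbf{u}\|_0\le k_{\mathbf{u}}$, $\|\mathbf{v}\|_0\le k_{\mathbf{v}}$. Condition on the event $\mathcal{E}$ (defined in the context). Let $k_{\max}=\max(k_{\mathbf{u}},k_{\mathbf{v}})$ and, for each $t$, let $t_{\mathbf{u}}=\min(t,k_{\mathbf{u}})$, $t_{\mathbf{v}}=\min(t,k_{\mathbf{v}})$. Let $\gamma\in(0,1)$. There is an absolute constant $C>0$ such that, with $C_1=C\frac{(1+\rho)^2}{\rho^2\gamma^2(1-\sqrt{\gamma})^2}$ and $C_2=C\frac{1+\rho}{\rho\gamma}$, if $$m\ \ge\ C_1\max_{1\le t\le k_{\max}}(t_{\mathbf{u}}+t_{\mathbf{v}})\,s_{\mathbf{u}}(t_{\mathbf{u}})\,s_{\mathbf{v}}(t_{\mathbf{v}})\log n,$$ then the outputs $\hat{\mathbf{u}}^{(k_{\max})},\hat{\mathbf{v}}^{(k_{\max})}$ of the Bi-SEP algorithm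 satisfy $$\sin\angle(\hat{\mathbf{u}}^{(k_{\max})},\mathbf{u})\le\sqrt{1-\gamma}+C_2\sqrt{\frac{(k_{\mathbf{u}}+k_{\mathbf{v}})\log n}{m}},\qquad \sin\angle(\hat{\mathbf{v}}^{(k_{\max})},\mathbf{v})\le\sqrt{1-\gamma}+C_2\sqrt{\frac{(k_{\mathbf{u}}+k_{\mathbf{v}})\log n}{m}}.$$
   Context: Sample cross-covariance: $\widehat{\boldsymbol{\Sigma}}_{xy}=\frac1m\sum_{i=1}^m\mathbf{x}_i\mathbf{y}_i^\top$; noise matrix $\mathbf{W}=\widehat{\boldsymbol{\Sigma}}_{xy}-\rho\mathbf{u}\mathbf{v}^\top$. For $S_1,S_2\subset[n]$, $\mathbf{W}_{S_1,S_2}$ is the submatrix with rows $S_1$, columns $S_2$; $\|\cdot\|_2$ is the spectral norm. The event $\mathcal{E}$ is: for all $S_1,S_2\subset[n]$ with $|S_1|\le k_{\mathbf{u}}$, $|S_2|\le k_{\mathbf{v}}$, $\|\mathbf{W}_{S_1,S_2}\|_2\le C\sqrt{((|S_1|+|S_2|)\log n+c'\log n)/m}$, for fixed absolute constants $C,c'>0$. Structure functions: with $u_{(i)}$ the $i$-th largest entry of $\mathbf{u}$ in absolute value, $s_{\mathbf{u}}(p)=(\sum_{i=1}^p u_{(i)}^2)^{-1}$ and similarly $s_{\mathbf{v}}(q)=(\sum_{j=1}^q v_{(j)}^2)^{-1}$, for $p,q\in[n]$. $\sin\angle(\mathbf{a},\mathbf{b})=\sqrt{1-\langle\mathbf{a},\mathbf{b}\rangle^2}$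 for unit vectors. Bi-SEP algorithm (input $\widehat{\boldsymbol{\Sigma}}_{xy},k_{\mathbf{u}},k_{\mathbf{v}}$): pick $(i_0,j_0)=\arg\max_{i,j}|(\widehat{\boldsymbol{\Sigma}}_{xy})_{ij}|$, set $S_{\mathbf{u}}^{(0)}=\{i_0\}$, $S_{\mathbf{v}}^{(0)}=\{j_0\}$. For $t=0,\dots,k_{\max}-1$: let $(\hat{\mathbf{u}}^{(t)},\hat{\mathbf{v}}^{(t)})$ be the unit-norm leading left/right singular vectors of the submatrix $(\widehat{\boldsymbol{\Sigma}}_{xy})_{S_{\mathbf{u}}^{(t)},S_{\mathbf{v}}^{(t)}}$, zero-padded to $\mathbb{R}^n$; set $\mathbf{r}_{\mathbf{u}}=\widehat{\boldsymbol{\Sigma}}_{xy}\hat{\mathbf{v}}^{(t)}$, $\mathbf{r}_{\mathbf{v}}=\widehat{\boldsymbol{\Sigma}}_{xy}^\top\hat{\mathbf{u}}^{(t)}$; let $S_{\mathbf{u}}^{(t+1)}$ be the indices of the $\min(t+1,k_{\mathbf{u}})$ largest entries of $|\mathbf{r}_{\mathbf{u}}|$ and $S_{\mathbf{v}}^{(t+1)}$ the indices of the $\min(t+1,k_{\mathbf{v}})$ largest entries of $|\mathbf{r}_{\mathbf{v}}|$. Output: the unit-norm leading singular pair $(\hat{\mathbf{u}}^{(k_{\max})},\hat{\mathbf{v}}^{(k_{\max})})$ of $(\widehat{\boldsymbol{\Sigma}}_{xy})_{S_{\mathbf{u}}^{(k_{\max})},S_{\mathbf{v}}^{(k_{\max})}}$,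 zero-padded to $\mathbb{R}^n$. *)

From HB Require Import structures.
From mathcomp Require Import all_boot all_order all_algebra.
From mathcomp Require Import boolp classical_sets reals exp.
Set Implicit Arguments. Unset Strict Implicit. Unset Printing Implicit Defensive.
Import Order.TTheory GRing.Theory Num.Theory.
Local Open Scope ring_scope.

Section BiSEP.
Variable R : realType.
Variable n : nat.

Definition dotv (a b : 'cV[R]_n) : R := \sum_(i < n) a i 0 * b i 0.
Definition norm2 (a : 'cV[R]_n) : R := Num.sqrt (dotv a a).

(* sin of the angle between unit vectors: sqrt(1 - <a,b>^2) *)
Definition sin_angle (a b : 'cV[R]_n) : R := Num.sqrt (1 - (dotv a b) ^+ 2).

Definition specnorm (A : 'M[R]_n) : R :=
  reals.sup [set r : R | exists b : 'cV[R]_n, norm2 b <= 1 /\ r = norm2 (A *m b)]%classic.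

(* the submatrix A_{S1,S2}, represented as the n x n matrix that agrees with A
   on S1 x S2 and is zero elsewhere (same spectral norm, same singular pairs
   once zero-padded) *)
Definition restr (S1 S2 : {set 'I_n}) (A : 'M[R]_n) : 'M[R]_n :=
  \matrix_(i, j) (if (i \in S1) && (j \in S2) then A i j else 0).

Definition supp (a : 'cV[R]_n) : {set 'I_n} := [set i | a i 0 != 0].

Definition l0 (a : 'cV[R]_n) : nat := #|supp a|.

(* (a, b) is a unit-norm leading left/right singular pair of A_{S1,S2},
   zero-padded to R^n *)
Definition leading_pair (A : 'M[R]_n) (S1 S2 : {set 'I_n}) (a b : 'cV[R]_n) : Prop :=
  let B := restr S1 S2 A in
  [/\ norm2 a = 1, norm2 b = 1, supp a \subset S1 & supp b \subset S2] /\
  (B *m b = specnorm B *: a /\ B^T *m a = specnorm B *: b).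

(* S is the set of indices of the k largest entries of |r| (ties broken
   arbitrarily; if k > n, all indices) *)
Definition top_idx (r : 'cV[R]_n) (k : nat) (S : {set 'I_n}) : Prop :=
  #|S| = minn k n /\
  (forall i j, i \in S -> j \notin S -> `|r j 0| <= `|r i 0|).

Definition sfun (a : 'cV[R]_n) (p : nat) : R :=
  (\sum_(x <- take p (sort (fun x y : R => y <= x)
                        [seq (a i 0) ^+ 2 | i <- enum 'I_n])) x)^-1.

Definition sample_cov (m : nat) (x y : 'I_m -> 'cV[R]_n) : 'M[R]_n :=
  (m%:R)^-1 *: \sum_(i < m) (x i *m (y i)^T).

Definition event_E (CE c' : R) (m ku kv : nat) (W : 'M[R]_n) : Prop :=
  forall S1 S2 : {set 'I_n}, (#|S1| <= ku)%N -> (#|S2| <= kv)%N ->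
    specnorm (restr S1 S2 W) <=
      CE * Num.sqrt (((#|S1| + #|S2|)%:R * ln n%:R + c' * ln n%:R) / m%:R).

(* an execution trace of Bi-SEP on input (Sig, ku, kv): index sets Su t, Sv t
   and singular pairs (uh t, vh t) for t = 0..kmax *)
Definition bisep_run (Sig : 'M[R]_n) (ku kv : nat)
    (Su Sv : nat -> {set 'I_n}) (uh vh : nat -> 'cV[R]_n) : Prop :=
  let kmax := maxn ku kv in
  [/\ (exists i0 j0 : 'I_n,
        (forall i j, `|Sig i j| <= `|Sig i0 j0|) /\
        Su 0%N = [set i0] /\ Sv 0%N = [set j0]),
      forall t, (t < kmax)%N ->
        [/\ leading_pair Sig (Su t) (Sv t) (uh t) (vh t),
            top_idx (Sig *m vh t) (minn t.+1 ku) (Su t.+1) &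
            top_idx (Sig^T *m uh t) (minn t.+1 kv) (Sv t.+1)]
    & leading_pair Sig (Su kmax) (Sv kmax) (uh kmax) (vh kmax)].

End BiSEP.

From HB Require Import structures.
From mathcomp Require Import all_boot all_order all_algebra.
From mathcomp Require Import boolp classical_sets reals exp.
From mathcomp Require Import ring lra zify.
Import Order.TTheory GRing.Theory Num.Theory.
Local Open Scope ring_scope.
Set Implicit Arguments. Unset Strict Implicit. Unset Printing Implicit Defensive.

(* Write Sig = W + rho u v^T.  With the assumed sample size, the event E bounds the noise W
   on every block visited up to step t by eta rho X_t Y_t, where
   eta = gamma (1 - sqrt gamma) / 64 and X_t (resp. Y_t) is the largest norm of u (resp. v)
   on t_u (resp. t_v) coordinates.  By induction on t the current supports carry at least
   half of X_t and Y_t.  Testing the bilinear form of Sig against the normalized restrictions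
   of u and v then shows that the leading singular pair of the current block is well aligned
   with u and v, so that selecting the largest entries of Sig v^(t) loses at most 5 eta X_t
   against the best support of the next size, and symmetrically for Sig^T u^(t).  At the last
   step the best supports contain supp u and supp v, the final supports carry norm at least
   1 - 5 eta, and the final alignments are at least 1 - 12 eta >= sqrt gamma: this gives the
   sine bounds even without the C2 term. *)

Section Euclid.
Variables (R : realType) (n : nat).
Implicit Types (a b c : 'cV[R]_n) (M N : 'M[R]_n) (S T : {set 'I_n}).

Lemma dotvC a b : dotv a b = dotv b a.
Proof. by apply: eq_bigr => i _; rewrite mulrC. Qed.

Lemma dotvDl a b c : dotv (a + b) c = dotv a c + dotv b c.
Proof. by rewrite /dotv -big_split; apply: eq_bigr => i _; rewrite mxE mulrDl. Qed.

Lemma dotvZl k a b : dotv (k *: a) b = k * dotv a b.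
Proof. by rewrite /dotv mulr_sumr; apply: eq_bigr => i _; rewrite mxE mulrA. Qed.

Lemma dotvDr a b c : dotv a (b + c) = dotv a b + dotv a c.
Proof. by rewrite dotvC dotvDl !(dotvC a). Qed.

Lemma dotvZr k a b : dotv a (k *: b) = k * dotv a b.
Proof. by rewrite dotvC dotvZl dotvC. Qed.

Lemma dotv0l b : dotv 0 b = 0.
Proof. by rewrite /dotv big1 // => i _; rewrite mxE mul0r. Qed.

Lemma dotvv_ge0 a : 0 <= dotv a a.
Proof. by apply: sumr_ge0 => i _; rewrite -expr2 sqr_ge0. Qed.

Lemma dotvv_eq0 a : dotv a a = 0 -> a = 0.
Proof.
move=> a0; apply/matrixP => i j; rewrite (ord1 j) mxE.
have /(_ i isT) : forall k, true -> a k 0 * a k 0 = 0.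
  by apply/psumr_eq0P => // k _; rewrite -expr2 sqr_ge0.
by move/eqP; rewrite mulf_eq0 orbb => /eqP.
Qed.

Lemma norm2_ge0 a : 0 <= norm2 a.
Proof. exact: sqrtr_ge0. Qed.

Lemma sqr_norm2 a : norm2 a ^+ 2 = dotv a a.
Proof. by rewrite sqr_sqrtr // dotvv_ge0. Qed.

Lemma norm2_0 : norm2 (0 : 'cV[R]_n) = 0.
Proof. by rewrite /norm2 dotv0l sqrtr0. Qed.

Lemma norm2Z k a : norm2 (k *: a) = `|k| * norm2 a.
Proof. by rewrite /norm2 dotvZl dotvZr mulrA -expr2 sqrtrM ?sqr_ge0 // sqrtr_sqr. Qed.

Lemma norm2N a : norm2 (- a) = norm2 a.
Proof. by rewrite -scaleN1r norm2Z normrN1 mul1r. Qed.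

Lemma norm2_le_sqr a x : 0 <= x -> norm2 a ^+ 2 <= x ^+ 2 -> norm2 a <= x.
Proof. by move=> x0; rewrite ler_sqr ?nnegrE ?norm2_ge0. Qed.

Lemma dotv_sqr_le a b : dotv a b ^+ 2 <= dotv a a * dotv b b.
Proof.
have [b0|bn0] := eqVneq (dotv b b) 0.
  by rewrite (dotvv_eq0 b0) dotvC !dotv0l mulr0 expr0n.
have b_gt0 : 0 < dotv b b by rewrite lt_def bn0 dotvv_ge0.
(* |<b,b> a - <a,b> b|^2 = <b,b> (<a,a> <b,b> - <a,b>^2) *)
have := dotvv_ge0 (dotv b b *: a + (- dotv a b) *: b).
rewrite !(dotvDl, dotvDr, dotvZl, dotvZr) (dotvC b a) => h.
by rewrite -subr_ge0 -(pmulr_rge0 _ b_gt0); lra.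
Qed.

Lemma normr_dotv_le a b : `|dotv a b| <= norm2 a * norm2 b.
Proof.
rewrite -ler_sqr ?nnegrE ?mulr_ge0 ?norm2_ge0 //.
by rewrite real_normK ?num_real // exprMn !sqr_norm2 dotv_sqr_le.
Qed.

Lemma norm2D_le a b : norm2 (a + b) <= norm2 a + norm2 b.
Proof.
apply: norm2_le_sqr; first by rewrite addr_ge0 ?norm2_ge0.
rewrite sqr_norm2 !(dotvDl, dotvDr) (dotvC b a) sqrrD !sqr_norm2.
have := normr_dotv_le a b; have := ler_norm (dotv a b); lra.
Qed.

Lemma norm2B_le a b : norm2 (a - b) <= norm2 a + norm2 b.
Proof. by rewrite -(norm2N b) norm2D_le. Qed.

Lemma abs_entry_le_norm2 a i : `|a i 0| <= norm2 a.
Proof.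
rewrite -ler_sqr ?nnegrE ?norm2_ge0 // real_normK ?num_real // sqr_norm2 /dotv.
by rewrite (bigD1 i) //= expr2 lerDl sumr_ge0 // => k _; rewrite -expr2 sqr_ge0.
Qed.

Lemma norm2_le_sum_abs a : norm2 a <= \sum_i `|a i 0|.
Proof.
apply: norm2_le_sqr; first exact: sumr_ge0.
rewrite sqr_norm2 expr2 mulr_suml; apply: ler_sum => i _.
apply: le_trans (ler_norm _) _; rewrite normrM ler_wpM2l //.
by rewrite (bigD1 i) //= lerDl sumr_ge0.
Qed.

Lemma sin_angle_le a b gamma : 0 <= gamma -> gamma <= 1 ->
  Num.sqrt gamma <= `|dotv a b| -> sin_angle a b <= Num.sqrt (1 - gamma).
Proof.
move=> g0 g1 hg; rewrite ler_sqrt ?subr_ge0 // lerD2l lerN2.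
by rewrite -(sqr_sqrtr g0) -[dotv a b ^+ 2]real_normK ?num_real // ler_sqr ?nnegrE ?sqrtr_ge0.
Qed.

Lemma norm2_mulmx_le_specnorm M b : norm2 b <= 1 -> norm2 (M *m b) <= specnorm M.
Proof.
move=> b1; apply: ub_le_sup; last by exists b.
exists (\sum_i \sum_j `|M i j|) => _ [b' [b'1 ->]].
apply: le_trans (norm2_le_sum_abs _) _; apply: ler_sum => i _.
rewrite mxE; apply: le_trans (ler_norm_sum _ _ _) _; apply: ler_sum => j _.
rewrite normrM -[leRHS]mulr1 ler_wpM2l //.
exact: le_trans (abs_entry_le_norm2 _ _) b'1.
Qed.

Definition bform M a b := dotv a (M *m b).

Definition restrv S a : 'cV[R]_n := \col_i (if i \in S then a i 0 else 0).

Lemma dotv_restrvl S a b : dotv (restrv S a) b = \sum_(i in S) a i 0 * b i 0.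
Proof.
rewrite /dotv [RHS]big_mkcond; apply: eq_bigr => i _; rewrite mxE.
by case: (i \in S); rewrite ?mul0r.
Qed.

Lemma dotv_restrvC S a b : dotv (restrv S a) b = dotv a (restrv S b).
Proof. by rewrite dotv_restrvl dotvC dotv_restrvl; apply: eq_bigr => i _; rewrite mulrC. Qed.

Lemma restrv_idem S a : restrv S (restrv S a) = restrv S a.
Proof. by apply/matrixP => i j; rewrite !mxE; case: (i \in S). Qed.

Lemma restrv_supp S a : supp a \subset S -> restrv S a = a.
Proof.
move=> /fintype.subsetP aS; apply/matrixP => i j; rewrite (ord1 j) mxE.
case: ifP => // iS; have : i \notin supp a by apply/negP => /aS; rewrite iS.
by rewrite inE negbK => /eqP.
Qed.

Lemma restrvD S a b : restrv S (a + b) = restrv S a + restrv S b.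
Proof. by apply/matrixP => i j; rewrite !mxE; case: (i \in S); rewrite ?addr0. Qed.

Lemma restrvZ S k a : restrv S (k *: a) = k *: restrv S a.
Proof. by apply/matrixP => i j; rewrite !mxE; case: (i \in S); rewrite ?mulr0. Qed.

Lemma restrv0 S : restrv S 0 = 0.
Proof. by apply/matrixP => i j; rewrite !mxE; case: (i \in S). Qed.

Lemma sqr_norm2_restrv S a : norm2 (restrv S a) ^+ 2 = \sum_(i in S) a i 0 ^+ 2.
Proof.
rewrite sqr_norm2 dotv_restrvC restrv_idem dotvC dotv_restrvl.
by apply: eq_bigr => i _; rewrite expr2.
Qed.

Lemma dotv_restrv_self S a : dotv (restrv S a) a = norm2 (restrv S a) ^+ 2.
Proof. by rewrite sqr_norm2 dotv_restrvC [RHS]dotv_restrvC restrv_idem. Qed.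

Lemma norm2_restrv_subset S T a : S \subset T -> norm2 (restrv S a) <= norm2 (restrv T a).
Proof.
move=> /fintype.subsetP ST; rewrite ler_sqrt ?dotvv_ge0 //; apply: ler_sum => i _.
rewrite !mxE; case: ifP => [/ST -> //|_].
by rewrite mul0r -expr2 sqr_ge0.
Qed.

Lemma norm2_restrv_le S a : norm2 (restrv S a) <= norm2 a.
Proof.
rewrite -[in leRHS](restrv_supp (finset.subsetT (supp a))).
by rewrite norm2_restrv_subset ?finset.subsetT.
Qed.

Lemma norm2_restrv1 i a : norm2 (restrv [set i] a) = `|a i 0|.
Proof.
apply/eqP; rewrite -(eqrXn2 (n := 2)) ?norm2_ge0 //.
by rewrite sqr_norm2_restrv big_set1 real_normK ?num_real.
Qed.

Lemma abs_dotv_restrv_le S a b : restrv S a = a -> norm2 a = 1 ->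
  `|dotv a b| <= norm2 (restrv S b).
Proof.
by move=> aS a1; rewrite -aS dotv_restrvC (le_trans (normr_dotv_le _ _)) // a1 mul1r.
Qed.

Lemma norm2_restrv_witness S c :
  exists2 z, norm2 z <= 1 /\ restrv S z = z & dotv z c = norm2 (restrv S c).
Proof.
set x := norm2 (restrv S c).
have [x0|xn0] := eqVneq x 0.
  by exists 0; rewrite ?norm2_0 ?restrv0 ?dotv0l.
have x_gt0 : 0 < x by rewrite lt_def xn0 norm2_ge0.
exists (x^-1 *: restrv S c); last first.
  by rewrite dotvZl dotv_restrv_self -/x expr2 mulrA mulVf ?mul1r.
rewrite restrvZ restrv_idem norm2Z ger0_norm ?invr_ge0 ?norm2_ge0 //.
by rewrite mulVf.
Qed.

Lemma mulmx_restr S1 S2 M b : restr S1 S2 M *m b = restrv S1 (M *m restrv S2 b).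
Proof.
apply/matrixP => i j; rewrite (ord1 j) !mxE; case: ifP => iS1.
  by apply: eq_bigr => k _; rewrite !mxE iS1 /=; case: ifP; rewrite ?mulr0 ?mul0r.
by rewrite big1 // => k _; rewrite !mxE iS1 mul0r.
Qed.

Lemma bform_restr S1 S2 M a b :
  bform (restr S1 S2 M) a b = bform M (restrv S1 a) (restrv S2 b).
Proof. by rewrite /bform mulmx_restr -dotv_restrvC. Qed.

Lemma bform_tr M a b : bform M^T a b = bform M b a.
Proof.
rewrite /bform /dotv; under eq_bigr => i _ do rewrite mxE mulr_sumr.
rewrite exchange_big /=; apply: eq_bigr => j _; rewrite mxE mulr_sumr.
by apply: eq_bigr => i _; rewrite mxE; ring.
Qed.

Lemma bformD M N a b : bform (M + N) a b = bform M a b + bform N a b.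
Proof. by rewrite /bform mulmxDl dotvDr. Qed.

Lemma bformZ k M a b : bform (k *: M) a b = k * bform M a b.
Proof. by rewrite /bform -scalemxAl dotvZr. Qed.

Lemma mulmx_outer (u v b : 'cV[R]_n) : (u *m v^T) *m b = dotv v b *: u.
Proof.
apply/matrixP => i j; rewrite (ord1 j) !mxE /dotv mulr_suml; apply: eq_bigr => k _.
by rewrite !mxE big_ord1 !mxE; ring.
Qed.

Lemma bform_outer (u v a b : 'cV[R]_n) : bform (u *m v^T) a b = dotv a u * dotv v b.
Proof. by rewrite /bform mulmx_outer dotvZr mulrC. Qed.

Lemma bform_le_specnorm M a b : norm2 a <= 1 -> norm2 b <= 1 -> `|bform M a b| <= specnorm M.
Proof.
move=> a1 b1; apply: le_trans (normr_dotv_le _ _) _; rewrite -[leRHS]mul1r.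
by apply: ler_pM; rewrite ?norm2_ge0 ?norm2_mulmx_le_specnorm.
Qed.

End Euclid.

Section Selection.
Variables (R : realType) (n : nat).
Implicit Types (a b : 'cV[R]_n) (M N : 'M[R]_n) (S T : {set 'I_n}).

Lemma l0_gt0 a : norm2 a = 1 -> (0 < l0 a)%N.
Proof.
move=> a1; rewrite card_gt0; apply/negP => /eqP a0.
suff : a = 0 by move=> az; move: a1; rewrite az norm2_0 => /eqP; rewrite eq_sym oner_eq0.
apply/matrixP => i j; rewrite (ord1 j) mxE.
have : i \notin supp a by rewrite a0 inE.
by rewrite inE negbK => /eqP.
Qed.

(* Each entry on T :\: S is dominated by each entry on S :\: T, a set that is no smaller. *)
Lemma top_idx_sum_le (r : 'cV[R]_n) k S T : top_idx r k S -> (#|T| <= #|S|)%N ->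
  \sum_(i in T) r i 0 ^+ 2 <= \sum_(i in S) r i 0 ^+ 2.
Proof.
move=> [_ top] TS.
rewrite (big_setID S) [leRHS](big_setID T) /= finset.setIC lerD2l.
have sqr_le j i : j \in T :\: S -> i \in S :\: T -> r j 0 ^+ 2 <= r i 0 ^+ 2.
  rewrite !inE => /andP[jS _] /andP[_ iS].
  by rewrite -[r j 0 ^+ 2]real_normK -?[r i 0 ^+ 2]real_normK ?num_real // ler_sqr ?nnegrE ?top.
have card_le : (#|T :\: S| <= #|S :\: T|)%N.
  by have := cardsID S T; have := cardsID T S; rewrite finset.setIC; lia.
have [ST0|STn0] := eqVneq #|S :\: T| 0%N.
  move: card_le; rewrite ST0 leqn0 => /eqP/cards0_eq ->.
  by rewrite big_set0 sumr_ge0 // => i _; rewrite sqr_ge0.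
have sum_ge0 : 0 <= \sum_(i in S :\: T) r i 0 ^+ 2 by rewrite sumr_ge0 // => i _; rewrite sqr_ge0.
suff : (\sum_(i in T :\: S) r i 0 ^+ 2) *+ #|S :\: T| <=
       (\sum_(i in S :\: T) r i 0 ^+ 2) *+ #|S :\: T|.
  by rewrite lerMn2r (negbTE STn0).
apply: le_trans (ler_wpMn2l sum_ge0 card_le).
rewrite -sumr_const -sumrMnl; apply: ler_sum => j jT.
by rewrite -sumr_const; apply: ler_sum => i iS; exact: sqr_le.
Qed.

Definition top_set a p : {set 'I_n} :=
  [set i in take p (sort (relpre (fun i => a i 0 ^+ 2) >=%R) (enum 'I_n))].

Lemma card_top_set a p : #|top_set a p| = minn p n.
Proof.
rewrite cardsE (card_uniqP (take_uniq _ _)) ?sort_uniq ?enum_uniq //.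
by rewrite size_take_min size_sort size_enum_ord.
Qed.

Lemma sfun_top_set a p : sfun a p = (\sum_(i in top_set a p) a i 0 ^+ 2)^-1.
Proof.
rewrite /sfun sort_map -map_take big_map big_uniq ?take_uniq ?sort_uniq ?enum_uniq //.
by congr (_^-1); apply: eq_bigl => i; rewrite inE.
Qed.

Lemma top_set_subset a p q : (p <= q)%N -> top_set a p \subset top_set a q.
Proof.
by move=> pq; apply/fintype.subsetP => i; rewrite !inE -(take_takel _ pq); apply: mem_take.
Qed.

Lemma top_set1 a : (0 < n)%N -> exists i, top_set a 1 = [set i].
Proof. by move=> n_gt0; apply/cards1P; rewrite card_top_set; lia. Qed.

Lemma sqr_le_top_set a p j : (0 < p)%N -> a j 0 ^+ 2 <= \sum_(i in top_set a p) a i 0 ^+ 2.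
Proof.
move=> p_gt0; set ge := relpre (fun i => a i 0 ^+ 2) >=%R.
have ge_trans : transitive ge by move=> x y z /= yx zy; apply: le_trans zy yx.
have : sorted ge (sort ge (enum 'I_n)) by apply: sort_sorted => x y /=; apply: le_total.
have : j \in sort ge (enum 'I_n) by rewrite mem_sort mem_enum.
rewrite /top_set -/ge; case: sort => [|h s] //= js /(order_path_min ge_trans) hmax.
have jh : a j 0 ^+ 2 <= a h 0 ^+ 2.
  by move: js; rewrite in_cons => /orP[/eqP -> //|/(allP hmax)].
apply: le_trans jh _; rewrite (bigD1 h) /= ?lerDl ?sumr_ge0 // => [i _|].
  by rewrite sqr_ge0.
by case: p p_gt0 => // p _; rewrite inE /= mem_head.
Qed.

Lemma norm2_restrv_top_set_gt0 a p : norm2 a = 1 -> (0 < p)%N ->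
  0 < norm2 (restrv (top_set a p) a).
Proof.
move=> a1 p_gt0; have /card_gt0P [j] := l0_gt0 a1; rewrite inE => aj.
rewrite -(ltr_pXn2r (n := 2)) ?nnegrE ?norm2_ge0 // expr0n /= sqr_norm2_restrv.
by apply: lt_le_trans (sqr_le_top_set _ j p_gt0); rewrite lt_def sqrf_eq0 aj sqr_ge0.
Qed.

Definition block_bounded N S1 S2 e := forall z w, norm2 z <= 1 -> norm2 w <= 1 ->
  `|bform N (restrv S1 z) (restrv S2 w)| <= e.

Lemma block_bounded_specnorm N S1 S2 e :
  specnorm (restr S1 S2 N) <= e -> block_bounded N S1 S2 e.
Proof. by move=> Ne z w z1 w1; rewrite -bform_restr (le_trans _ Ne) ?bform_le_specnorm. Qed.

Lemma block_bounded_tr N S1 S2 e : block_bounded N S1 S2 e -> block_bounded N^T S2 S1 e.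
Proof. by move=> Ne z w z1 w1; rewrite bform_tr; apply: Ne. Qed.

Lemma block_bounded_entry N i j e : block_bounded N [set i] [set j] e -> `|N i j| <= e.
Proof.
have restrv_delta k : restrv [set k] (delta_mx k 0) = delta_mx k 0 :> 'cV[R]_n.
  apply: restrv_supp; apply/fintype.subsetP => l; rewrite !inE mxE eqxx andbT.
  by case: (l == k) => //; rewrite eqxx.
have unit_delta k : norm2 (delta_mx k 0 : 'cV[R]_n) <= 1.
  by rewrite -restrv_delta norm2_restrv1 mxE !eqxx normr1.
move=> /(_ _ _ (unit_delta i) (unit_delta j)); rewrite !restrv_delta.
rewrite /bform /dotv (bigD1 i) //= big1 => [|k ki]; last by rewrite mxE (negbTE ki) mul0r.
rewrite mxE !eqxx mul1r addr0 mxE (bigD1 j) //= big1 => [|k kj].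
  by rewrite mxE !eqxx mulr1 addr0.
by rewrite mxE (negbTE kj) mulr0.
Qed.

Lemma norm2_restrv_mulmx_le N S S2 e b : block_bounded N S S2 e ->
  norm2 b <= 1 -> restrv S2 b = b -> norm2 (restrv S (N *m b)) <= e.
Proof.
move=> Ne b1 bS2; have [z [z1 zS] <-] := norm2_restrv_witness S (N *m b).
by rewrite -zS -bS2 (le_trans (ler_norm _)) ?Ne.
Qed.

(* The only property of a leading singular pair of the block M_{S1,S2} used below. *)
Definition maximal_pair M S1 S2 a b :=
  [/\ norm2 a = 1, norm2 b = 1, restrv S1 a = a, restrv S2 b = b &
      forall z w, norm2 z <= 1 -> norm2 w <= 1 ->
        bform M (restrv S1 z) (restrv S2 w) <= bform M a b].

Lemma leading_pair_maximal M S1 S2 a b : leading_pair M S1 S2 a b -> maximal_pair M S1 S2 a b.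
Proof.
move=> [[a1 b1 /restrv_supp aS1 /restrv_supp bS2] [Bb _]].
split=> // z w z1 w1.
have -> : bform M a b = specnorm (restr S1 S2 M).
  by rewrite -aS1 -bS2 -bform_restr /bform Bb dotvZr -sqr_norm2 a1 expr1n mulr1.
by rewrite -bform_restr (le_trans (ler_norm _)) ?bform_le_specnorm.
Qed.

Lemma maximal_pair_tr M S1 S2 a b : maximal_pair M S1 S2 a b -> maximal_pair M^T S2 S1 b a.
Proof. by move=> [a1 b1 aS1 bS2 Mab]; split=> // z w z1 w1; rewrite !bform_tr Mab. Qed.

End Selection.

(* x, y: norms of u, v on the current supports; p, q: alignments of the singular pair with
   u, v; X', x': norms of u on the best and on the selected support of the next size. *)
Lemma captured_step_num (R : realFieldType) (eta X Y x y p q X' x' : R) :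
  0 <= eta -> eta <= 1/64 -> 0 < X -> 0 < Y -> X / 2 <= x -> Y / 2 <= y ->
  p <= x -> 0 <= q ->
  x * y - 2 * (eta * X * Y) <= p * q -> q * X' - 2 * (eta * X * Y) <= q * x' ->
  X' - 5 * eta * X <= x'.
Proof.
move=> eta0 eta1 X0 Y0 xX yY px q0 align select.
have x0 : 0 < x by lra.
have etaY0 : 0 <= eta * Y by rewrite mulr_ge0 // ltW.
have q_ge : 7 / 16 * Y <= q.
  have pq : p * q <= x * q by rewrite ler_wpM2r.
  have Xx : eta * Y * X <= eta * Y * (2 * x) by rewrite ler_wpM2l //; lra.
  have : x * (y - 4 * eta * Y) <= x * q by lra.
  rewrite ler_pM2l // => yq.
  have : eta * Y <= 1/64 * Y by rewrite ler_wpM2r // ltW.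
  lra.
(* q >= 7/16 Y turns the selection loss q (X' - x') <= 2 eta X Y into X' - x' <= 5 eta X *)
have q0' : 0 < q by lra.
have etaX0 : 0 <= eta * X by rewrite mulr_ge0 // ltW.
have Yq : eta * X * (7 / 16 * Y) <= eta * X * q by rewrite ler_wpM2l.
have etaXq0 : 0 <= eta * X * q by rewrite mulr_ge0 // ltW.
have : q * (X' - x') <= q * (5 * eta * X) by lra.
by rewrite ler_pM2l // => ?; lra.
Qed.

Section Alignment.
Variables (R : realType) (n : nat) (N : 'M[R]_n) (rho : R) (u v : 'cV[R]_n).
Hypothesis rho_gt0 : 0 < rho.
Implicit Types (a b : 'cV[R]_n) (S T : {set 'I_n}).

Let M := N + rho *: (u *m v^T).

Lemma maximal_pair_alignment S1 S2 a b d :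
  maximal_pair M S1 S2 a b -> block_bounded N S1 S2 (rho * d) ->
  norm2 (restrv S1 u) * norm2 (restrv S2 v) - 2 * d <= `|dotv a u| * `|dotv v b|.
Proof.
move=> [a1 b1 aS1 bS2 Mab] Nd.
have [z [z1 zS1] zu] := norm2_restrv_witness S1 u.
have [w [w1 wS2] wv] := norm2_restrv_witness S2 v.
have lower : rho * (norm2 (restrv S1 u) * norm2 (restrv S2 v)) - rho * d <= bform M z w.
  rewrite /M bformD bformZ bform_outer zu (dotvC v) wv.
  by have := Nd z w z1 w1; rewrite zS1 wS2 ler_norml => /andP[+ _]; lra.
have upper : bform M a b <= rho * d + rho * (`|dotv a u| * `|dotv v b|).
  rewrite /M bformD bformZ bform_outer -normrM.
  have := Nd a b; rewrite aS1 bS2 a1 b1 => /(_ (lexx _) (lexx _)) Nab.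
  have := ler_wpM2l (ltW rho_gt0) (ler_norm (dotv a u * dotv v b)).
  have := ler_norm (bform N a b); lra.
have := Mab z w z1 w1; rewrite zS1 wS2 => zw_le.
rewrite -(ler_pM2l rho_gt0); lra.
Qed.

Lemma top_idx_captured_mass S2 S T k b d :
  norm2 b <= 1 -> restrv S2 b = b -> top_idx (M *m b) k S -> (#|T| <= #|S|)%N ->
  block_bounded N S S2 (rho * d) -> block_bounded N T S2 (rho * d) ->
  `|dotv v b| * norm2 (restrv T u) - 2 * d <= `|dotv v b| * norm2 (restrv S u).
Proof.
move=> b1 bS2 top TS NS NT.
have Mb : M *m b = N *m b + (rho * dotv v b) *: u.
  by rewrite mulmxDl -scalemxAl mulmx_outer scalerA.
have coef : `|rho * dotv v b| = rho * `|dotv v b| by rewrite normrM gtr0_norm.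
have TS_mass : norm2 (restrv T (M *m b)) <= norm2 (restrv S (M *m b)).
  by rewrite -ler_sqr ?nnegrE ?norm2_ge0 // !sqr_norm2_restrv (top_idx_sum_le top TS).
have upperS : norm2 (restrv S (M *m b)) <= rho * d + rho * `|dotv v b| * norm2 (restrv S u).
  rewrite Mb restrvD restrvZ (le_trans (norm2D_le _ _)) // norm2Z coef.
  by rewrite lerD2r (norm2_restrv_mulmx_le NS).
have lowerT : rho * `|dotv v b| * norm2 (restrv T u) <= norm2 (restrv T (M *m b)) + rho * d.
  have -> : rho * `|dotv v b| * norm2 (restrv T u) =
            norm2 (restrv T (M *m b) - restrv T (N *m b)).
    by rewrite Mb restrvD restrvZ addrAC subrr add0r norm2Z coef.
  by rewrite (le_trans (norm2B_le _ _)) // lerD2l (norm2_restrv_mulmx_le NT).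
rewrite -(ler_pM2l rho_gt0); lra.
Qed.

Lemma captured_mass_step S1 S2 S T k a b eta X Y :
  0 <= eta -> eta <= 1/64 -> 0 < X -> 0 < Y ->
  X / 2 <= norm2 (restrv S1 u) -> Y / 2 <= norm2 (restrv S2 v) ->
  maximal_pair M S1 S2 a b -> top_idx (M *m b) k S -> (#|T| <= #|S|)%N ->
  block_bounded N S1 S2 (rho * (eta * X * Y)) ->
  block_bounded N S S2 (rho * (eta * X * Y)) ->
  block_bounded N T S2 (rho * (eta * X * Y)) ->
  norm2 (restrv T u) - 5 * eta * X <= norm2 (restrv S u).
Proof.
move=> eta0 eta1 X0 Y0 xX yY mp top TS N1 NS NT; have [a1 b1 aS1 bS2 _] := mp.
apply: (captured_step_num eta0 eta1 X0 Y0 xX yY (abs_dotv_restrv_le u aS1 a1) (normr_ge0 _)).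
  exact: maximal_pair_alignment mp N1.
by apply: top_idx_captured_mass top TS NS NT; rewrite ?b1.
Qed.

End Alignment.

Lemma captured_base_num (R : realFieldType) (eta X Y x y : R) :
  0 <= eta -> eta <= 1/4 -> 0 < X -> 0 < Y -> 0 <= x -> x <= X -> 0 <= y -> y <= Y ->
  (1 - 2 * eta) * (X * Y) <= x * y -> X / 2 <= x /\ Y / 2 <= y.
Proof.
move=> eta0 eta1 X0 Y0 x0 xX y0 yY XY.
have xy_xY : x * y <= x * Y by rewrite ler_wpM2l.
have xy_Xy : x * y <= X * y by rewrite ler_wpM2r.
have etaX : eta * X <= 1/4 * X by apply: ler_wpM2r => //; apply: ltW.
have etaY : eta * Y <= 1/4 * Y by apply: ler_wpM2r => //; apply: ltW.
split.
- have : (1 - 2 * eta) * X * Y <= x * Y by rewrite -mulrA; lra.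
  by rewrite ler_pM2r // => ?; lra.
- have : (1 - 2 * eta) * Y * X <= y * X by rewrite -mulrA (mulrC Y) (mulrC y); lra.
  by rewrite ler_pM2r // => ?; lra.
Qed.

Lemma alignment_final_num (R : realFieldType) (eta s x y p q : R) :
  0 <= eta -> 0 <= s -> 12 * eta <= 1 - s -> 1 - 5 * eta <= x -> 1 - 5 * eta <= y ->
  0 <= p -> p <= 1 -> 0 <= q -> q <= 1 -> x * y - 2 * eta <= p * q ->
  s <= p /\ s <= q.
Proof.
move=> eta0 s0 eta_s ex ey p0 p1 q0 q1 align.
have xy : (1 - 5 * eta) * (1 - 5 * eta) <= x * y by apply: ler_pM => //; lra.
have pq_p : p * q <= p by rewrite -[leRHS]mulr1 ler_wpM2l.
have pq_q : p * q <= q by rewrite -[leRHS]mul1r ler_wpM2r.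
have eta2 : 0 <= eta * eta by rewrite mulr_ge0.
split; nra.
Qed.

(* 64 ^ 2 = 4096 comes from the denominator of eta = gamma (1 - sqrt gamma) / 64 below,
   and 2 + c' absorbs both terms in the bound of the event E *)
Definition bisep_C (R : numDomainType) (CE c' : R) : R := 4096 * CE ^+ 2 * (2 + c').

Lemma bisep_C_gt0 (R : numFieldType) (CE c' : R) : 0 < CE -> 0 < c' -> 0 < bisep_C CE c'.
Proof.
move=> CE0 c'0; apply: mulr_gt0; last exact: addr_gt0.
by rewrite mulr_gt0 ?exprn_gt0 ?ltr0n.
Qed.

Lemma sample_size_noise_num (R : rcfType) (CE c' rho gamma L m P s X Y : R) :
  0 < CE -> 0 < c' -> 0 < rho -> 0 < gamma -> gamma < 1 -> 0 <= L -> 0 < m ->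
  1 <= P -> 0 <= s -> s <= 2 * P -> 0 < X -> 0 < Y ->
  bisep_C CE c' * (1 + rho) ^+ 2 / (rho ^+ 2 * gamma ^+ 2 * (1 - Num.sqrt gamma) ^+ 2)
    * (P * (X ^+ 2)^-1 * (Y ^+ 2)^-1) * L <= m ->
  CE * Num.sqrt ((s * L + c' * L) / m) <= rho * (gamma * (1 - Num.sqrt gamma) / 64 * X * Y).
Proof.
move=> CE0 c'0 rho0 g0 g1 L0 m0 P1 s0 sP X0 Y0 m_ge.
set g := Num.sqrt gamma; set e := rho * _.
have g_lt1 : g < 1 by rewrite -sqrtr1 ltr_sqrt.
have g_gt0 : 0 < g by rewrite sqrtr_gt0.
have e0 : 0 <= e by rewrite /e !mulr_ge0 ?invr_ge0 ?subr_ge0 ?ltW.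
have sL0 : 0 <= s * L + c' * L by rewrite addr_ge0 ?mulr_ge0 // ltW.
have lhs0 : 0 <= CE * Num.sqrt ((s * L + c' * L) / m) by rewrite mulr_ge0 ?sqrtr_ge0 ?ltW.
rewrite -ler_sqr ?nnegrE //.
rewrite exprMn sqr_sqrtr ?divr_ge0 ?(ltW m0) // mulrA ler_pdivrMr //.
apply: le_trans (ler_wpM2l (sqr_ge0 e) m_ge).
have -> : e ^+ 2 * (bisep_C CE c' * (1 + rho) ^+ 2
      / (rho ^+ 2 * gamma ^+ 2 * (1 - g) ^+ 2) * (P * (X ^+ 2)^-1 * (Y ^+ 2)^-1) * L)
    = CE ^+ 2 * ((2 + c') * (1 + rho) ^+ 2 * (P * L)).
  by rewrite /e /bisep_C; field; rewrite !gt_eqF ?subr_gt0.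
apply: ler_wpM2l; first exact: sqr_ge0.
have PL : 1 * L <= P * L by rewrite ler_wpM2r.
have rho2 : 1 <= (1 + rho) ^+ 2 by rewrite exprn_ege1 // lerDl ltW.
have PL0 : 0 <= (2 + c') * (P * L) by rewrite mulr_ge0 //; lra.
have rhoPL := ler_wpM2l PL0 rho2.
have sL : s * L <= 2 * P * L by rewrite ler_wpM2r.
have c'L : c' * L <= c' * (P * L) by apply: ler_wpM2l; [exact: ltW | rewrite -[leLHS]mul1r].
lra.
Qed.

Section BiSEPRecovery.
Variables (R : realType) (CE c' : R) (n m : nat) (rho gamma : R) (u v : 'cV[R]_n).
Variables (ku kv : nat) (Sig : 'M[R]_n) (Su Sv : nat -> {set 'I_n}) (uh vh : nat -> 'cV[R]_n).
Hypotheses (CE_gt0 : 0 < CE) (c'_gt0 : 0 < c') (n_gt0 : (0 < n)%N) (m_gt0 : (0 < m)%N).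
Hypotheses (rho_gt0 : 0 < rho) (gamma_gt0 : 0 < gamma) (gamma_lt1 : gamma < 1).
Hypotheses (u_unit : norm2 u = 1) (v_unit : norm2 v = 1).
Hypotheses (u_sparse : (l0 u <= ku)%N) (v_sparse : (l0 v <= kv)%N).

Let W := Sig - rho *: (u *m v^T).
Let kmax := maxn ku kv.

Hypothesis event : event_E CE c' m ku kv W.
Hypothesis sample_size :
  bisep_C CE c' * (1 + rho) ^+ 2 / (rho ^+ 2 * gamma ^+ 2 * (1 - Num.sqrt gamma) ^+ 2)
    * (\big[Num.max/0]_(1 <= t < kmax.+1)
         ((minn t ku + minn t kv)%:R * sfun u (minn t ku) * sfun v (minn t kv)))
    * ln n%:R <= m%:R.
Hypothesis run : bisep_run Sig ku kv Su Sv uh vh.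
Implicit Types (S T : {set 'I_n}).

(* t_u and t_v, the initial singletons being counted as step 1 *)
Let pu t := minn (maxn t 1) ku.
Let qv t := minn (maxn t 1) kv.
Let X t := norm2 (restrv (top_set u (pu t)) u).
Let Y t := norm2 (restrv (top_set v (qv t)) v).
Let eta := gamma * (1 - Num.sqrt gamma) / 64.
Let captures t := X t / 2 <= norm2 (restrv (Su t) u) /\ Y t / 2 <= norm2 (restrv (Sv t) v).

Lemma ku_gt0 : (0 < ku)%N.
Proof. exact: leq_trans (l0_gt0 u_unit) u_sparse. Qed.

Lemma kv_gt0 : (0 < kv)%N.
Proof. exact: leq_trans (l0_gt0 v_unit) v_sparse. Qed.

Lemma eta_bounds : [/\ 0 <= eta, eta <= 1/64 & 12 * eta <= 1 - Num.sqrt gamma].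
Proof.
have g0 : 0 < Num.sqrt gamma by rewrite sqrtr_gt0.
have g1 : Num.sqrt gamma < 1 by rewrite -sqrtr1 ltr_sqrt.
have le1 : gamma * (1 - Num.sqrt gamma) <= 1 - Num.sqrt gamma.
  by rewrite -[leRHS]mul1r ler_wpM2r ?subr_ge0 ?ltW.
have ge0 : 0 <= gamma * (1 - Num.sqrt gamma) by rewrite mulr_ge0 ?subr_ge0 ?ltW.
rewrite /eta; split; lra.
Qed.

Lemma X_gt0 t : 0 < X t.
Proof. by apply: norm2_restrv_top_set_gt0; rewrite // /pu; have := ku_gt0; lia. Qed.

Lemma Y_gt0 t : 0 < Y t.
Proof. by apply: norm2_restrv_top_set_gt0; rewrite // /qv; have := kv_gt0; lia. Qed.

Lemma X_le1 t : X t <= 1.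
Proof. by rewrite -u_unit norm2_restrv_le. Qed.

Lemma Y_le1 t : Y t <= 1.
Proof. by rewrite -v_unit norm2_restrv_le. Qed.

Lemma X_homo t t' : (t <= t')%N -> X t <= X t'.
Proof. by move=> tt'; apply/norm2_restrv_subset/top_set_subset; rewrite /pu; lia. Qed.

Lemma Y_homo t t' : (t <= t')%N -> Y t <= Y t'.
Proof. by move=> tt'; apply/norm2_restrv_subset/top_set_subset; rewrite /qv; lia. Qed.

Lemma Sig_split : Sig = W + rho *: (u *m v^T).
Proof. by rewrite /W subrK. Qed.

Lemma Sig_tr_split : Sig^T = W^T + rho *: (v *m u^T).
Proof. by rewrite {1}Sig_split linearD linearZ /= trmx_mul trmxK. Qed.

Lemma card_Su t : (t <= kmax)%N -> #|Su t| = minn (pu t) n.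
Proof.
case: run => [[i0 [j0 [_ [Su0 _]]]] step _].
case: t => [_|t /step [_ [-> _] _]]; last by rewrite /pu; lia.
by rewrite Su0 cards1 /pu; have := ku_gt0; lia.
Qed.

Lemma card_Sv t : (t <= kmax)%N -> #|Sv t| = minn (qv t) n.
Proof.
case: run => [[i0 [j0 [_ [_ Sv0]]]] step _].
case: t => [_|t /step [_ _ [-> _]]]; last by rewrite /qv; lia.
by rewrite Sv0 cards1 /qv; have := kv_gt0; lia.
Qed.

Lemma W_block_bounded t S1 S2 : (t <= kmax)%N ->
  (#|S1| <= ku)%N -> (#|S2| <= kv)%N -> (#|S1| + #|S2| <= 2 * (pu t + qv t))%N ->
  block_bounded W S1 S2 (rho * (eta * X t * Y t)).
Proof.
move=> tk S1k S2k S12.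
apply/block_bounded_specnorm/(le_trans (event S1k S2k)).
have ln_ge0 : 0 <= ln (n%:R : R) by rewrite ln_ge0 // ler1n.
apply: (sample_size_noise_num (P := (pu t + qv t)%:R)) => //.
- by rewrite ltr0n.
- by rewrite ler1n /pu; have := ku_gt0; lia.
- by rewrite -natrM ler_nat.
- exact: X_gt0.
- exact: Y_gt0.
apply: le_trans sample_size; apply: ler_wpM2r => //; apply: ler_wpM2l.
  have C0 := ltW (bisep_C_gt0 CE_gt0 c'_gt0).
  apply: divr_ge0; first exact: mulr_ge0 C0 (sqr_ge0 _).
  exact: mulr_ge0 (mulr_ge0 (sqr_ge0 _) (sqr_ge0 _)) (sqr_ge0 _).
apply: le_trans (le_bigmax_seq _ (maxn t 1) xpredT _ _ _); last 2 first.
- by rewrite mem_index_iota; move: tk; rewrite /kmax; have := ku_gt0; lia.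
- by [].
by rewrite /= !sfun_top_set -!sqr_norm2_restrv.
Qed.

Lemma card_Su_le t t' : (t <= t')%N -> (t <= kmax)%N -> (#|Su t| <= minn (pu t') n)%N.
Proof. by move=> tt' tk; rewrite card_Su // /pu; lia. Qed.

Lemma card_Sv_le t t' : (t <= t')%N -> (t <= kmax)%N -> (#|Sv t| <= minn (qv t') n)%N.
Proof. by move=> tt' tk; rewrite card_Sv // /qv; lia. Qed.

Lemma W_block_bounded_step t t' S1 S2 : (t <= kmax)%N -> (t' <= t.+1)%N ->
  (#|S1| <= minn (pu t') n)%N -> (#|S2| <= minn (qv t') n)%N ->
  block_bounded W S1 S2 (rho * (eta * X t * Y t)).
Proof.
move=> tk t't S1k S2k.
by apply: W_block_bounded tk _ _ _; move: S1k S2k; rewrite /pu /qv; lia.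
Qed.

Lemma captures_base : captures 0.
Proof.
have [[i0 [j0 [Sig_max [Su0 Sv0]]]] _ _] := run.
have [eta0 eta1 _] := eta_bounds.
have pu0 : pu 0 = 1%N by rewrite /pu; have := ku_gt0; lia.
have qv0 : qv 0 = 1%N by rewrite /qv; have := kv_gt0; lia.
have [h top_u] := top_set1 u n_gt0.
have [h' top_v] := top_set1 v n_gt0.
have X0 : X 0 = `|u h 0| by rewrite /X pu0 top_u norm2_restrv1.
have Y0 : Y 0 = `|v h' 0| by rewrite /Y qv0 top_v norm2_restrv1.
have ui0 : `|u i0 0| <= X 0.
  rewrite -ler_sqr ?nnegrE ?norm2_ge0 // real_normK ?num_real //.
  by rewrite /X sqr_norm2_restrv sqr_le_top_set // pu0.
have vj0 : `|v j0 0| <= Y 0.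
  rewrite -ler_sqr ?nnegrE ?norm2_ge0 // real_normK ?num_real //.
  by rewrite /Y sqr_norm2_restrv sqr_le_top_set // qv0.
have W_entry i j : `|W i j| <= rho * (eta * X 0 * Y 0).
  apply/block_bounded_entry/W_block_bounded; rewrite ?cards1 //.
  - by have := ku_gt0.
  - by have := kv_gt0.
  - by rewrite pu0 qv0.
have Sig_entry i j : Sig i j = W i j + rho * (u i 0 * v j 0).
  by rewrite Sig_split !mxE big_ord1 !mxE.
(* Sig i0 j0 is the largest entry, so up to noise it beats rho u_h v_h' = rho X_0 Y_0. *)
have top_entry : rho * (X 0 * Y 0) <= `|Sig h h'| + `|W h h'|.
  have -> : rho * (X 0 * Y 0) = `|Sig h h' - W h h'|.
    by rewrite Sig_entry addrC addrK X0 Y0 !normrM gtr0_norm.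
  exact: ler_normB.
have max_entry : `|Sig i0 j0| <= rho * (`|u i0 0| * `|v j0 0|) + `|W i0 j0|.
  by rewrite Sig_entry addrC (le_trans (ler_normD _ _)) // !normrM gtr0_norm.
have : rho * ((1 - 2 * eta) * (X 0 * Y 0)) <= rho * (`|u i0 0| * `|v j0 0|).
  by have := Sig_max h h'; have := W_entry h h'; have := W_entry i0 j0; lra.
rewrite ler_pM2l // /captures Su0 Sv0 !norm2_restrv1 => XY.
by apply: captured_base_num XY => //; rewrite ?X_gt0 ?Y_gt0 //; lra.
Qed.

Lemma captures_step t : (t < kmax)%N -> captures t ->
  (forall T, (#|T| <= #|Su t.+1|)%N ->
     norm2 (restrv T u) - 5 * eta * X t <= norm2 (restrv (Su t.+1) u)) /\
  (forall T, (#|T| <= #|Sv t.+1|)%N ->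
     norm2 (restrv T v) - 5 * eta * Y t <= norm2 (restrv (Sv t.+1) v)).
Proof.
move=> tk [xX yY]; have [_ /(_ t tk) [lp top_u top_v] _] := run.
have [eta0 eta1 _] := eta_bounds.
have noise S1 S2 := @W_block_bounded_step t t.+1 S1 S2 (ltnW tk) (leqnn _).
have cu := card_Su_le (leqnSn t) (ltnW tk); have cu1 := card_Su_le (leqnn _) tk.
have cv := card_Sv_le (leqnSn t) (ltnW tk); have cv1 := card_Sv_le (leqnn _) tk.
split=> T TS.
- apply: (captured_mass_step (N := W) rho_gt0 eta0 eta1 (X_gt0 t) (Y_gt0 t) xX yY _ _ TS).
  + by rewrite -Sig_split; exact: leading_pair_maximal lp.
  + by rewrite -Sig_split; exact: top_u.
  + exact: noise cu cv.
  + exact: noise cu1 cv.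
  + exact: noise (leq_trans TS cu1) cv.
- apply: (captured_mass_step (N := W^T) rho_gt0 eta0 eta1 (Y_gt0 t) (X_gt0 t) yY xX _ _ TS).
  + by rewrite -Sig_tr_split; exact: maximal_pair_tr (leading_pair_maximal lp).
  + by rewrite -Sig_tr_split; exact: top_v.
  all: rewrite mulrAC; apply: block_bounded_tr.
  + exact: noise cu cv.
  + exact: noise cu cv1.
  + exact: noise cu (leq_trans TS cv1).
Qed.

Lemma captures_all t : (t < kmax)%N -> captures t.
Proof.
elim: t => [_|t IH tk]; first exact: captures_base.
have [step_u step_v] := captures_step (ltnW tk) (IH (ltnW tk)).
have [eta0 eta1 _] := eta_bounds.
split.
- have := step_u (top_set u (pu t.+1)); rewrite card_top_set card_Su ?(ltnW tk) //.
  move=> /(_ (leqnn _)); have := X_homo (leqnSn t); have := X_gt0 t.+1.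
  have : eta * X t <= 1/64 * X t.+1.
    by apply: ler_pM => //; [exact: ltW (X_gt0 t) | exact: X_homo].
  rewrite /X; lra.
- have := step_v (top_set v (qv t.+1)); rewrite card_top_set card_Sv ?(ltnW tk) //.
  move=> /(_ (leqnn _)); have := Y_homo (leqnSn t); have := Y_gt0 t.+1.
  have : eta * Y t <= 1/64 * Y t.+1.
    by apply: ler_pM => //; [exact: ltW (Y_gt0 t) | exact: Y_homo].
  rewrite /Y; lra.
Qed.

Lemma final_capture :
  1 - 5 * eta <= norm2 (restrv (Su kmax) u) /\ 1 - 5 * eta <= norm2 (restrv (Sv kmax) v).
Proof.
have [k kE] : exists k, kmax = k.+1 by exists kmax.-1; rewrite /kmax; have := ku_gt0; lia.
have kk : (k < kmax)%N by rewrite kE.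
have [step_u step_v] := captures_step kk (captures_all kk).
have [eta0 _ _] := eta_bounds.
have card_n S : (#|S| <= n)%N.
  by rewrite (leq_trans (subset_leq_card (finset.subsetT S))) // cardsT card_ord.
have supp_u : (#|supp u| <= #|Su k.+1|)%N.
  by rewrite -kE card_Su // /pu; move: (card_n (supp u)) u_sparse; rewrite /l0 /kmax; lia.
have supp_v : (#|supp v| <= #|Sv k.+1|)%N.
  by rewrite -kE card_Sv // /qv; move: (card_n (supp v)) v_sparse; rewrite /l0 /kmax; lia.
split.
- have := step_u _ supp_u; rewrite restrv_supp // u_unit -kE.
  have : eta * X k <= eta by rewrite -[leRHS]mulr1 ler_wpM2l ?X_le1.
  lra.
- have := step_v _ supp_v; rewrite restrv_supp // v_unit -kE.
  have : eta * Y k <= eta by rewrite -[leRHS]mulr1 ler_wpM2l ?Y_le1.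
  lra.
Qed.

Lemma final_alignment :
  Num.sqrt gamma <= `|dotv (uh kmax) u| /\ Num.sqrt gamma <= `|dotv v (vh kmax)|.
Proof.
have mp : maximal_pair (W + rho *: (u *m v^T)) (Su kmax) (Sv kmax) (uh kmax) (vh kmax).
  by rewrite -Sig_split; apply: leading_pair_maximal; case: run.
have [a1 b1 _ _ _] := mp.
have [eta0 _ eta_s] := eta_bounds.
have [xu yv] := final_capture.
have noise := W_block_bounded_step (leqnn kmax) (leqnSn kmax)
  (card_Su_le (leqnn _) (leqnn _)) (card_Sv_le (leqnn _) (leqnn _)).
have align := maximal_pair_alignment rho_gt0 mp noise.
have XY1 : eta * X kmax * Y kmax <= eta.
  rewrite -mulrA -[leRHS]mulr1 ler_wpM2l // -[1]mulr1.
  by apply: ler_pM; rewrite ?X_le1 ?Y_le1 ?norm2_ge0.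
have dot_le1 a b : norm2 a = 1 -> norm2 b = 1 -> `|dotv a b| <= 1.
  by move=> a_1 b_1; rewrite (le_trans (normr_dotv_le _ _)) // a_1 b_1 mulr1.
apply: (alignment_final_num eta0 (sqrtr_ge0 _) eta_s xu yv) => //; last by lra.
all: by rewrite ?dot_le1.
Qed.

Lemma bisep_sin_angle_le :
  sin_angle (uh kmax) u <= Num.sqrt (1 - gamma) /\ sin_angle (vh kmax) v <= Num.sqrt (1 - gamma).
Proof.
have [au vb] := final_alignment.
by split; apply: sin_angle_le; rewrite ?(ltW gamma_gt0) ?(ltW gamma_lt1) // dotvC.
Qed.

End BiSEPRecovery.

Theorem theorem1 (R : realType) (CE c' : R) (hCE : 0 < CE) (hc' : 0 < c') :
  exists C : R, 0 < C /\
  forall (n m : nat) (x y : 'I_m -> 'cV[R]_n) (rho : R) (u v : 'cV[R]_n)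
         (ku kv : nat) (gamma : R)
         (Su Sv : nat -> {set 'I_n}) (uh vh : nat -> 'cV[R]_n),
    (0 < n)%N -> (0 < m)%N ->
    0 < rho -> rho < 1 ->
    norm2 u = 1 -> norm2 v = 1 ->
    (l0 u <= ku)%N -> (l0 v <= kv)%N ->
    0 < gamma -> gamma < 1 ->
    let Sig := sample_cov x y in
    let W := Sig - rho *: (u *m v^T) in
    event_E CE c' m ku kv W ->
    let kmax := maxn ku kv in
    let C1 := C * (1 + rho) ^+ 2
                / (rho ^+ 2 * gamma ^+ 2 * (1 - Num.sqrt gamma) ^+ 2) in
    let C2 := C * (1 + rho) / (rho * gamma) in
    m%:R >= C1 * (\big[Num.max/0]_(1 <= t < kmax.+1)
                    ((minn t ku + minn t kv)%:R
                     * sfun u (minn t ku) * sfun v (minn t kv)))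
              * ln n%:R ->
    bisep_run Sig ku kv Su Sv uh vh ->
    sin_angle (uh kmax) u <=
      Num.sqrt (1 - gamma) + C2 * Num.sqrt ((ku + kv)%:R * ln n%:R / m%:R) /\
    sin_angle (vh kmax) v <=
      Num.sqrt (1 - gamma) + C2 * Num.sqrt ((ku + kv)%:R * ln n%:R / m%:R).
Proof.
exists (bisep_C CE c'); split; first exact: bisep_C_gt0.
move=> n m x y rho u v ku kv gamma Su Sv uh vh n_gt0 m_gt0 rho_gt0 _ u_unit v_unit
  u_sparse v_sparse gamma_gt0 gamma_lt1 Sig W event kmax C1 C2 sample_size run.
have [sin_u sin_v] := bisep_sin_angle_le hCE hc' n_gt0 m_gt0 rho_gt0 gamma_gt0 gamma_lt1
  u_unit v_unit u_sparse v_sparse event sample_size run.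
have C2_ge0 : 0 <= C2.
  apply: divr_ge0; last exact: mulr_ge0 (ltW rho_gt0) (ltW gamma_gt0).
  exact: mulr_ge0 (ltW (bisep_C_gt0 hCE hc')) (addr_ge0 ler01 (ltW rho_gt0)).
have slack := mulr_ge0 C2_ge0 (sqrtr_ge0 ((ku + kv)%:R * ln n%:R / m%:R)).
by split; [apply: le_trans sin_u _ | apply: le_trans sin_v _]; rewrite lerDl.
Qed.
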